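(* Let $Y$ be an $\mathrm{OA}(N,k,2,t)$ with symbols from $\{-1,1\}$ and strength $t\ge 1$, and let $X$ be an $N\times k$ array with entries in $\{-1,1\}$. Then $X$ is OD-equivalent to $Y$ if and only if there exists $g\in G(k)^{\rm OD}$ such that the multiset of rows of $X$ equals the multiset of rows of $g(Y)$. Moreover, if $X$ is OD-equivalent to $Y$, then $X$ is an $\mathrm{OA}(N,k,2,2\lfloor t/2\rfloor)$.
   Context: An $\mathrm{OA}(N,k,s,t)$ with $t\in\{0,\dots,k\}$ is an $N\times k$ array over an $s$-element symbol set such that in every $N\times t$ subarray each of the $s^t$ possible $t$-tuples appears exactly $N/s^t$ times as a row. Two $N\times k$ arrays $Y_1,Y_2$ over $\{-1,1\}$ are Hadamard equivalent if $Y_2$ is obtained from $Y_1$ by a sequence of signed permutations (permutations possibly followed by sign changes) of rows or columns, i.e. $Y_2=P_1D_1Y_1D_2P_2$ for permutation matrices $P_1,P_2$ and diagonal $\pm1$ matrices $D_1,D_2$. $X_1,X_2$ are OD-equivalent if $[\mathbf{1},X_1]$ and $[\mathbf{1},X_2]$ are Hadamard equivalent. $G(k)^{\rm OD}$ is the group of permutations of $\{-1,1\}^k$ generated by coordinate permutations, sign changes of single coordinates, and $R_i(z_1,\dots,z_k)=(z_1z_i,\dots,z_{i-1}z_i,z_i,z_{i+1}z_i,\dots,z_kz_i)$ for $i=1,\dots,k$; it acts on arrays row by row. *)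

From mathcomp Require Import all_boot all_algebra all_fingroup.
Set Implicit Arguments. Unset Strict Implicit. Unset Printing Implicit Defensive.
Import GRing.Theory.
Local Open Scope ring_scope.

Definition pm1 (x : int) : bool := (x == 1) || (x == -1).
Definition pm1mx (m n : nat) (A : 'M[int]_(m, n)) : bool :=
  [forall i, forall j, pm1 (A i j)].

Definition had_equiv (m n : nat) (A B : 'M[int]_(m, n)) : Prop :=
  exists (s1 : 'S_m) (s2 : 'S_n) (d1 : 'rV[int]_m) (d2 : 'rV[int]_n),
    [/\ pm1mx d1, pm1mx d2 &
        B = perm_mx s1 *m diag_mx d1 *m A *m diag_mx d2 *m perm_mx s2].

Definition od_equiv (N k : nat) (X1 X2 : 'M[int]_(N, k)) : Prop :=
  had_equiv (row_mx (const_mx 1 : 'M[int]_(N, 1)) X1)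
            (row_mx (const_mx 1 : 'M[int]_(N, 1)) X2).

Definition isOA2 (N k t : nat) (Y : 'M[int]_(N, k)) : Prop :=
  [/\ pm1mx Y, (t <= k)%N &
      forall c : 'I_t -> 'I_k, injective c ->
      forall v : 'I_t -> int, (forall j, pm1 (v j)) ->
        (#|[set i : 'I_N | [forall j, Y i (c j) == v j]]| * 2 ^ t)%N = N].

(* Points of {-1,1}^k encoded as {ffun 'I_k -> bool}: b encodes (-1)^b. *)
Definition sgnb (b : bool) : int := (-1) ^+ b.
Definition toPt (k : nat) (r : 'rV[int]_k) : {ffun 'I_k -> bool} :=
  [ffun j => r 0 j == -1].

Definition cperm_fun (k : nat) (s : 'S_k) (z : {ffun 'I_k -> bool})
  : {ffun 'I_k -> bool} := [ffun j => z (s j)].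
Lemma cperm_inj (k : nat) (s : 'S_k) : injective (cperm_fun s).
Proof.
move=> z w /ffunP H; apply/ffunP => j; have := H ((s^-1)%g j).
by rewrite !ffunE permKV.
Qed.
Definition cperm (k : nat) (s : 'S_k) : {perm {ffun 'I_k -> bool}} :=
  perm (@cperm_inj k s).

Definition flip_fun (k : nat) (i : 'I_k) (z : {ffun 'I_k -> bool})
  : {ffun 'I_k -> bool} := [ffun j => if j == i then ~~ z j else z j].
Lemma flip_inj (k : nat) (i : 'I_k) : injective (flip_fun i).
Proof.
apply: (can_inj (g := flip_fun i)) => z; apply/ffunP => j.
by rewrite !ffunE; case: eqP => // _; rewrite negbK.
Qed.
Definition flip (k : nat) (i : 'I_k) : {perm {ffun 'I_k -> bool}} :=
  perm (@flip_inj k i).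

(* generator 3: R_i (z_1..z_k) = (z_1 z_i, .., z_i, .., z_k z_i);
   products of signs correspond to xor of bits *)
Definition R_fun (k : nat) (i : 'I_k) (z : {ffun 'I_k -> bool})
  : {ffun 'I_k -> bool} := [ffun j => if j == i then z i else z j (+) z i].
Lemma R_inj (k : nat) (i : 'I_k) : injective (R_fun i).
Proof.
apply: (can_inj (g := R_fun i)) => z; apply/ffunP => j.
rewrite !ffunE eqxx; case: eqP => [->//|_].
by rewrite addbK.
Qed.
Definition Rperm (k : nat) (i : 'I_k) : {perm {ffun 'I_k -> bool}} :=
  perm (@R_inj k i).

Definition GOD_gens (k : nat) : {set {perm {ffun 'I_k -> bool}}} :=
  [set cperm s | s : 'S_k] :|: [set flip i | i : 'I_k] :|: [set Rperm i | i : 'I_k].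

Definition GOD (k : nat) : {set {perm {ffun 'I_k -> bool}}} := <<GOD_gens k>>%g.

Definition actOD (N k : nat) (g : {perm {ffun 'I_k -> bool}}) (Y : 'M[int]_(N, k))
  : 'M[int]_(N, k) := \matrix_(i, j) sgnb (g (toPt (row i Y)) j).

Definition rows (m n : nat) (A : 'M[int]_(m, n)) : seq 'rV[int]_n :=
  [seq row i A | i <- enum 'I_m].

From mathcomp Require Import all_boot all_algebra all_fingroup zify.
Set Implicit Arguments. Unset Strict Implicit. Unset Printing Implicit Defensive.
Import GRing.Theory.
Local Open Scope ring_scope.

(* Write a row of X as a point z of {-1,1}^k (the bit b standing for (-1)^b) and
   the corresponding row of [1, X] as [aug z]. Each generator of G(k)^OD acts on
   [aug z] as a signed permutation of the columns followed by a sign change of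
   the row (R_i exchanges the all-ones column with column i and multiplies the
   row by z_i), so [1, g(Y)] is Hadamard equivalent to [1, Y]. Conversely, a
   Hadamard equivalence between [1, X] and [1, Y] permutes the rows and applies
   a signed column permutation; after bringing the all-ones column back to its
   place with some R_i, what remains is a signed coordinate permutation, which
   lies in G(k)^OD.

   Coordinate permutations and sign changes obviously preserve strength. For
   R_c and a set S of at most m coordinates avoiding c, a pattern count of
   R_c(Y) on S splits into two pattern counts on S + c. When |S| = m these are
   not controlled by the strength, but as all m-marginals of S + c are uniform,
   a pattern count on S + c is unchanged when an even number of coordinates of
   the pattern are flipped; for m even this turns the two counts into the two
   halves of a pattern count on S. *)

Lemma sgnbK b : (sgnb b == -1) = b.
Proof. by case: b. Qed.

Lemma sgnbD a b : sgnb (a (+) b) = sgnb a * sgnb b.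
Proof. exact: signr_addb. Qed.

Lemma sgnb_inj : injective sgnb.
Proof. exact: (can_inj (g := fun x => x == -1) sgnbK). Qed.

Lemma pm1_sgnb b : pm1 (sgnb b).
Proof. by case: b. Qed.

Lemma pm1E x : pm1 x -> x = sgnb (x == -1).
Proof. by case/orP => /eqP ->. Qed.

Lemma pm1mxP m n (A : 'M[int]_(m, n)) :
  reflect (forall i j, pm1 (A i j)) (pm1mx A).
Proof. by apply: (iffP forallP) => H i; [apply/forallP: (H i) | apply/forallP]. Qed.

(** * Hadamard equivalence *)

Definition signed_perm_equiv m n (A B : 'M[int]_(m, n)) : Prop :=
  exists (s : 'S_m) (p : 'S_n) (a : 'I_m -> bool) (b : 'I_n -> bool),
    forall i j, B i j = sgnb (a i (+) b j) * A (s i) (p j).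

Lemma had_mxE m n (s1 : 'S_m) (s2 : 'S_n) d1 d2 (A : 'M[int]_(m, n)) i j :
  (perm_mx s1 *m diag_mx d1 *m A *m diag_mx d2 *m perm_mx s2) i j
  = d1 0 (s1 i) * d2 0 (s2^-1%g j) * A (s1 i) (s2^-1%g j).
Proof.
rewrite -[s2]invgK -col_permE mxE mul_mx_diag mxE -mulmxA -row_permE mxE.
by rewrite mul_diag_mx mxE invgK mulrAC.
Qed.

Lemma had_equivP m n (A B : 'M[int]_(m, n)) :
  had_equiv A B <-> signed_perm_equiv A B.
Proof.
split=> [[s1 [s2 [d1 [d2 [/pm1mxP d1E /pm1mxP d2E ->]]]]] | [s [p [a [b E]]]]].
  exists s1, s2^-1%g, (fun i => d1 0 (s1 i) == -1), (fun j => d2 0 (s2^-1%g j) == -1).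
  by move=> i j; rewrite had_mxE sgnbD -!pm1E.
exists s, p^-1%g, (\row_i sgnb (a (s^-1%g i))), (\row_j sgnb (b (p^-1%g j))); split.
- by apply/pm1mxP => i j; rewrite mxE pm1_sgnb.
- by apply/pm1mxP => i j; rewrite mxE pm1_sgnb.
by apply/matrixP => i j; rewrite had_mxE E !mxE invgK !permK sgnbD.
Qed.

Lemma signed_perm_equiv_sym m n (A B : 'M[int]_(m, n)) :
  signed_perm_equiv A B -> signed_perm_equiv B A.
Proof.
case=> s [p [a [b E]]].
exists s^-1%g, p^-1%g, (fun i => a (s^-1%g i)), (fun j => b (p^-1%g j)) => i j.
by rewrite E !permKV mulrA -sgnbD addbb mul1r.
Qed.

Lemma signed_perm_equiv_trans m n (A B C : 'M[int]_(m, n)) :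
  signed_perm_equiv A B -> signed_perm_equiv B C -> signed_perm_equiv A C.
Proof.
case=> s1 [p1 [a1 [b1 E1]]] [s2 [p2 [a2 [b2 E2]]]].
exists (s2 * s1)%g, (p2 * p1)%g, (fun i => a2 i (+) a1 (s2 i)),
  (fun j => b2 j (+) b1 (p2 j)) => i j.
by rewrite E2 E1 !permM mulrA -sgnbD addbACA.
Qed.

Definition augment N k (W : 'M[int]_(N, k)) : 'M[int]_(N, 1 + k) :=
  row_mx (const_mx 1) W.

Lemma augmentE N k (W : 'M[int]_(N, k)) i (l : 'I_k.+1) :
  augment W i l = if unlift ord0 l is Some j then W i j else 1.
Proof.
case: unliftP => [j ->|->].
  by rewrite (_ : lift ord0 j = rshift 1 j) ?row_mxEr //; apply: val_inj.
by rewrite (_ : ord0 = lshift k (ord0 : 'I_1)) ?row_mxEl ?mxE //; apply: val_inj.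
Qed.

(* A point [z] of {-1,1}^k, preceded by the coordinate +1 of the all-ones column. *)
Definition aug k (z : {ffun 'I_k -> bool}) (l : 'I_k.+1) : bool :=
  if unlift ord0 l is Some j then z j else false.

Lemma aug0 k (z : {ffun 'I_k -> bool}) : aug z ord0 = false.
Proof. by rewrite /aug unlift_none. Qed.

Lemma aug_lift k (z : {ffun 'I_k -> bool}) j : aug z (lift ord0 j) = z j.
Proof. by rewrite /aug liftK. Qed.

Lemma aug_inj_sign k (y z : {ffun 'I_k -> bool}) b :
  (forall l, aug y l = b (+) aug z l) -> y = z.
Proof.
move=> E; have := E ord0; rewrite !aug0 addbF => b0.
by apply/ffunP => j; rewrite -!aug_lift E -b0.
Qed.

Lemma augment_sgnb N k (W : 'M[int]_(N, k)) i l :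
  pm1mx W -> augment W i l = sgnb (aug (toPt (row i W)) l).
Proof.
move/pm1mxP => W_pm1; rewrite augmentE /aug.
by case: unlift => // j; rewrite ffunE mxE -pm1E.
Qed.

Lemma toPt_actOD N k g (W : 'M[int]_(N, k)) i :
  toPt (row i (actOD g W)) = g (toPt (row i W)).
Proof. by apply/ffunP => j; rewrite !ffunE !mxE sgnbK. Qed.

Lemma actOD_pm1 N k g (W : 'M[int]_(N, k)) : pm1mx (actOD g W).
Proof. by apply/pm1mxP => i j; rewrite mxE pm1_sgnb. Qed.

(** * The action of G(k)^OD on augmented rows *)

Section AugmentedAction.
Variable k : nat.
Implicit Types (z : {ffun 'I_k -> bool}) (g h : {perm {ffun 'I_k -> bool}}).

Lemma aug_cperm s z l : aug (cperm s z) l = aug z (lift_perm ord0 ord0 s l).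
Proof.
case: (unliftP ord0 l) => [j ->|->]; last by rewrite lift_perm_id !aug0.
by rewrite lift_perm_lift !aug_lift permE ffunE.
Qed.

Lemma aug_flip i z l : aug (flip i z) l = (l == lift ord0 i) (+) aug z l.
Proof.
case: (unliftP ord0 l) => [j ->|->]; last by rewrite !aug0 (negbTE (neq_lift _ _)).
by rewrite !aug_lift (inj_eq (@lift_inj _ _)) permE ffunE; case: eqP.
Qed.

Lemma aug_Rperm c z l :
  aug (Rperm c z) l = z c (+) aug z (tperm ord0 (lift ord0 c) l).
Proof.
case: (unliftP ord0 l) => [j ->|->]; last by rewrite tpermL aug0 aug_lift addbb.
rewrite aug_lift permE ffunE; case: (eqVneq j c) => [->|ne_jc].
  by rewrite tpermR aug0 addbF.
rewrite tpermD ?aug_lift 1?addbC //.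
by rewrite (inj_eq (@lift_inj _ _)) eq_sym.
Qed.

Definition aug_signed_perm g : Prop :=
  exists (p : 'S_k.+1) (b : 'I_k.+1 -> bool) (a : {ffun 'I_k -> bool} -> bool),
    forall z l, aug (g z) l = a z (+) b l (+) aug z (p l).

Lemma aug_signed_perm1 : aug_signed_perm 1.
Proof. by exists 1%g, xpred0, xpred0 => z l; rewrite !perm1. Qed.

Lemma aug_signed_permM g h :
  aug_signed_perm g -> aug_signed_perm h -> aug_signed_perm (g * h).
Proof.
case=> p1 [b1 [a1 E1]] [p2 [b2 [a2 E2]]].
exists (p2 * p1)%g, (fun l => b2 l (+) b1 (p2 l)), (fun z => a2 (g z) (+) a1 z).
by move=> z l; rewrite !permM E2 E1 addbA addbACA.
Qed.

Lemma aug_signed_perm_gen h : h \in GOD_gens k -> aug_signed_perm h.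
Proof.
case/setUP => [/setUP[]|] /imsetP[x _ ->].
- by exists (lift_perm ord0 ord0 x), xpred0, xpred0 => z l; rewrite aug_cperm.
- by exists 1%g, (eq_op^~ (lift ord0 x)), xpred0 => z l; rewrite aug_flip perm1.
- exists (tperm ord0 (lift ord0 x)), xpred0, (fun z => z x) => z l.
  by rewrite aug_Rperm addbF.
Qed.

End AugmentedAction.

Section GODgroup.
Variable k : nat.
Implicit Types (z : {ffun 'I_k -> bool}) (g h : {perm {ffun 'I_k -> bool}}).

Lemma cperm_GOD s : cperm s \in GOD k.
Proof. by apply/mem_gen/setUP; left; apply/setUP; left; apply: imset_f. Qed.

Lemma flip_GOD i : flip i \in GOD k.
Proof. by apply/mem_gen/setUP; left; apply/setUP; right; apply: imset_f. Qed.

Lemma Rperm_GOD c : Rperm c \in GOD k.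
Proof. by apply/mem_gen/setUP; right; apply: imset_f. Qed.

Lemma GOD_ind (P : {perm {ffun 'I_k -> bool}} -> Prop) :
  P 1%g -> (forall g h, P g -> h \in GOD_gens k -> P (g * h)%g) ->
  forall g, g \in GOD k -> P g.
Proof.
move=> P1 PM g /gen_prodgP[n [c c_gen ->]].
elim: n c c_gen => [|n IH] c c_gen; first by rewrite big_ord0.
by rewrite big_ord_recr /=; apply: PM; [apply: IH | apply: c_gen].
Qed.

Lemma aug_signed_perm_GOD g : g \in GOD k -> aug_signed_perm g.
Proof.
apply: GOD_ind => [|g' h Pg /aug_signed_perm_gen]; first exact: aug_signed_perm1.
exact: aug_signed_permM.
Qed.

Lemma GOD_flip_seq (A : seq 'I_k) : uniq A ->
  exists2 g, g \in GOD k & forall z, g z = [ffun j => (j \in A) (+) z j].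
Proof.
elim: A => [_|i A IH /= /andP[iNA /IH[g g_GOD gE]]].
  by exists 1%g => [|z]; [exact: group1 | apply/ffunP => j; rewrite perm1 ffunE].
exists (g * flip i)%g => [|z]; first by rewrite groupM ?flip_GOD.
apply/ffunP => j; rewrite permM gE permE !ffunE in_cons.
by case: eqP => [->|] //=; rewrite (negbTE iNA).
Qed.

Lemma GOD_signed_cperm (s : 'S_k) (e : 'I_k -> bool) :
  exists2 g, g \in GOD k & forall z, g z = [ffun j => e j (+) z (s j)].
Proof.
have [f f_GOD fE] := GOD_flip_seq (filter_uniq e (enum_uniq 'I_k)).
exists (cperm s * f)%g => [|z]; first by rewrite groupM ?cperm_GOD.
by apply/ffunP => j; rewrite permM fE permE !ffunE mem_filter mem_enum andbT.
Qed.

Lemma perm_fix0 (p : 'S_k.+1) : p ord0 = ord0 ->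
  exists s : 'S_k, forall j, p (lift ord0 j) = lift ord0 (s j).
Proof.
move=> p0; pose f j := odflt j (unlift ord0 (p (lift ord0 j))).
have fE j : lift ord0 (f j) = p (lift ord0 j).
  rewrite /f; case: unliftP => [l -> //|].
  rewrite -{2}p0 => /perm_inj j0.
  by have := neq_lift ord0 j; rewrite j0 eqxx.
have f_inj : injective f.
  by move=> j1 j2 /(congr1 (lift ord0)); rewrite !fE => /perm_inj /lift_inj.
by exists (perm f_inj) => j; rewrite permE fE.
Qed.

(* Every signed permutation of the columns of [1, X], renormalised so that the
   first column is again all ones, is induced by an element of G(k)^OD. *)
Lemma GOD_aug_signed_perm (p : 'S_k.+1) (b : 'I_k.+1 -> bool) :
  exists2 g, g \in GOD k & exists a : {ffun 'I_k -> bool} -> bool,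
    forall z l, aug (g z) l = a z (+) b l (+) aug z (p l).
Proof.
wlog p0 : p / p ord0 = ord0.
  move=> fix0; case: (unliftP ord0 (p ord0)) => [c pc|]; last exact: fix0.
  have [|g g_GOD [a gE]] := fix0 (p * tperm ord0 (lift ord0 c))%g.
    by rewrite permM pc tpermR.
  exists (Rperm c * g)%g; first by rewrite groupM ?Rperm_GOD.
  exists (fun z => a (Rperm c z) (+) z c) => z l.
  by rewrite permM gE aug_Rperm permM tpermK !addbA (addbAC _ (b l)).
have [s ps] := perm_fix0 p0.
have [g g_GOD gE] := GOD_signed_cperm s (fun j => b ord0 (+) b (lift ord0 j)).
exists g => //; exists (fun=> b ord0) => z l.
case: (unliftP ord0 l) => [j ->|->]; last by rewrite p0 !aug0 addbb.
by rewrite ps !aug_lift gE ffunE.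
Qed.

End GODgroup.

Lemma perm_eq_rowsP m n (A B : 'M[int]_(m, n)) :
  reflect (exists s : 'S_m, forall i, row i A = row (s i) B)
          (perm_eq (rows A) (rows B)).
Proof.
rewrite -[rows A]/(tval [tuple row i A | i < m]).
rewrite -[rows B]/(tval [tuple row i B | i < m]).
apply: (iffP tuple_permP) => -[s AE]; exists s.
  by move=> i; have /(congr1 (nth 0 ^~ i)) := AE; rewrite !nth_mktuple tnth_mktuple.
by congr tval; apply: eq_mktuple => i; rewrite tnth_mktuple AE.
Qed.

Lemma pm1_row_eq m n (A B : 'M[int]_(m, n)) i j : pm1mx A -> pm1mx B ->
  toPt (row i A) = toPt (row j B) -> row i A = row j B.
Proof.
move=> /pm1mxP A_pm1 /pm1mxP B_pm1 AB; apply/rowP => l.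
have := congr1 (fun z : {ffun _ -> bool} => z l) AB; rewrite !ffunE !mxE => ABl.
by rewrite (pm1E (A_pm1 i l)) (pm1E (B_pm1 j l)) ABl.
Qed.

Lemma signed_perm_equiv_rows N k (A B : 'M[int]_(N, k)) (s : 'S_N) :
  (forall i, row i B = row (s i) A) -> signed_perm_equiv (augment A) (augment B).
Proof.
move=> BE; exists s, 1%g, xpred0, xpred0 => i l.
rewrite perm1 mul1r !augmentE; case: unlift => // j.
by have /rowP/(_ j) := BE i; rewrite !mxE.
Qed.

Lemma signed_perm_equiv_act N k (W : 'M[int]_(N, k)) g :
  pm1mx W -> aug_signed_perm g -> signed_perm_equiv (augment W) (augment (actOD g W)).
Proof.
move=> W_pm1 [p [b [a gE]]].
exists 1%g, p, (fun i => a (toPt (row i W))), b => i l.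
by rewrite perm1 !augment_sgnb ?actOD_pm1 // toPt_actOD gE sgnbD.
Qed.

Lemma od_equiv_GOD N k (X Y : 'M[int]_(N, k)) g : pm1mx Y -> g \in GOD k ->
  perm_eq (rows X) (rows (actOD g Y)) -> od_equiv X Y.
Proof.
move=> Y_pm1 g_GOD /perm_eq_rowsP[s XE]; apply/had_equivP/signed_perm_equiv_sym.
apply: signed_perm_equiv_trans (signed_perm_equiv_rows XE).
exact: signed_perm_equiv_act Y_pm1 (aug_signed_perm_GOD g_GOD).
Qed.

Lemma GOD_od_equiv N k (X Y : 'M[int]_(N, k)) : pm1mx X -> pm1mx Y ->
  od_equiv X Y -> exists2 g, g \in GOD k & perm_eq (rows X) (rows (actOD g Y)).
Proof.
move=> X_pm1 Y_pm1 /had_equivP[s [p [a [b E]]]].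
have [g g_GOD [c gE]] := GOD_aug_signed_perm p b.
have YE i : toPt (row i Y) = g (toPt (row (s i) X)).
  apply: (@aug_inj_sign _ _ _ (a i (+) c (toPt (row (s i) X)))) => l.
  apply: sgnb_inj; rewrite -augment_sgnb // E augment_sgnb // -sgnbD.
  by rewrite gE !addbA addbK.
exists g^-1%g; first by rewrite groupV.
apply/perm_eq_rowsP; exists s^-1%g => r; apply: pm1_row_eq; rewrite ?actOD_pm1 //.
by rewrite toPt_actOD YE permKV permK.
Qed.

Local Close Scope ring_scope.

(** * Orthogonal arrays of even strength *)

Lemma sum_of_halves c1 c2 s n :
  c1 * 2 ^ s.+1 = n -> c2 * 2 ^ s.+1 = n -> (c1 + c2) * 2 ^ s = n.
Proof. rewrite expnS; lia. Qed.

Lemma count_split (T : Type) (a b : pred T) s :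
  count a s = count (predI a b) s + count (predI a (predC b)) s.
Proof. by elim: s => //= x s ->; case: (a x); case: (b x) => /=; lia. Qed.

Section Strength.
Variable k : nat.
Implicit Types (P : seq {ffun 'I_k -> bool}) (S T U : {set 'I_k}).
Implicit Types (w z : {ffun 'I_k -> bool}).

Definition agree S w z := [forall j in S, z j == w j].

Definition has_strength m P :=
  forall S, #|S| <= m -> forall w, count (agree S w) P * 2 ^ #|S| = size P.

Definition flips U w : {ffun 'I_k -> bool} := [ffun j => (j \in U) (+) w j].

Lemma agreeD1 S j w z :
  j \in S -> agree S w z = agree (S :\ j) w z && (z j == w j).
Proof.
move=> jS; apply/forall_inP/andP => [zw | [/forall_inP zw zwj] x xS].
  by split; [apply/forall_inP => x /setD1P[_ /zw] | apply: zw].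
by case: (eqVneq x j) => [->|ne_xj] //; apply: zw; rewrite !inE ne_xj.
Qed.

Lemma count_agreeD1 S j w P : j \in S ->
  count (agree (S :\ j) w) P = count (agree S w) P + count (agree S (flip_fun j w)) P.
Proof.
move=> jS; rewrite (count_split _ (fun z => z j == w j)); congr (_ + _).
  by apply: eq_count => z /=; rewrite (agreeD1 _ _ jS).
apply: eq_count => z /=; rewrite (agreeD1 _ _ jS) ffunE eqxx.
have -> : agree (S :\ j) (flip_fun j w) z = agree (S :\ j) w z.
  by apply: eq_forallb_in => x /setD1P[ne_xj _]; rewrite ffunE (negbTE ne_xj).
by case: (z j); case: (w j); rewrite ?andbT ?andbF.
Qed.

Lemma has_strength_exact m P : m <= k ->
  (forall S, #|S| = m -> forall w, count (agree S w) P * 2 ^ m = size P) ->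
  has_strength m P.
Proof.
move=> le_mk Pm S; have [d] := ubnP (m - #|S|).
elim: d S => // d IH S ltd leS w.
have [eqS|ltS] := eqVneq #|S| m; first by rewrite eqS Pm.
have : 0 < #|~: S| by have := cardsC S; rewrite card_ord; lia.
case/card_gt0P => j; rewrite inE => jNS.
have cardjS : #|j |: S| = #|S|.+1 by rewrite cardsU1 jNS.
rewrite -(setU1K jNS) (count_agreeD1 _ _ (setU11 j S)) setU1K //.
by apply: sum_of_halves; rewrite -cardjS; apply: IH; lia.
Qed.

Lemma has_strength_mono m m' P : m' <= m -> has_strength m P -> has_strength m' P.
Proof. by move=> le_m'm Pm S leS; apply: Pm; apply: leq_trans le_m'm. Qed.

Lemma has_strength_perm m P P' : perm_eq P P' -> has_strength m P -> has_strength m P'.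
Proof. by move=> PP' Pm S leS w; rewrite -(perm_size PP') -(seq.permP PP') Pm. Qed.

Lemma agree_cperm S s w z :
  agree S w (cperm s z) = agree (s @: S) (cperm s^-1 w) z.
Proof.
apply/forall_inP/forall_inP => [zw _ /imsetP[j jS ->] | zw j jS].
  by have := zw j jS; rewrite !permE !ffunE permK.
by have := zw _ (imset_f s jS); rewrite !permE !ffunE permK.
Qed.

Lemma agree_flip S i w z : agree S w (flip i z) = agree S (flip i w) z.
Proof.
apply: eq_forallb_in => j _; rewrite !permE !ffunE.
by case: (j == i); case: (z j); case: (w j).
Qed.

Lemma agree_Rperm_in S c w z :
  c \in S -> agree S w (Rperm c z) = agree S (Rperm c w) z.
Proof.
move=> cS; rewrite !(agreeD1 _ _ cS) !permE !ffunE eqxx.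
have [zc|] := eqVneq (z c) (w c); last by rewrite !andbF.
rewrite !andbT; apply: eq_forallb_in => j /setD1P[/negbTE ne_jc _].
by rewrite !ffunE ne_jc zc; case: (z j); case: (w j); case: (w c).
Qed.

Lemma count_agree_flip2 T K P i j v :
  (forall j w, j \in T -> count (agree (T :\ j) w) P = K) -> i \in T -> j \in T ->
  count (agree T (flip_fun j (flip_fun i v))) P = count (agree T v) P.
Proof.
move=> marg iT jT.
have := count_agreeD1 v P iT; have := count_agreeD1 (flip_fun i v) P jT.
by rewrite !marg //; lia.
Qed.

Lemma count_agree_flips_even T K P U w :
  (forall j w, j \in T -> count (agree (T :\ j) w) P = K) ->
  U \subset T -> ~~ odd #|U| -> count (agree T (flips U w)) P = count (agree T w) P.
Proof.
move=> marg; have [n] := ubnP #|U|; elim: n U => // n IH U ltU UT evU.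
have [->|[i iU]] := set_0Vmem U.
  by congr count; congr agree; apply/ffunP => x; rewrite ffunE inE.
have [j jUi] : exists j, j \in U :\ i.
  apply/card_gt0P; rewrite lt0n; apply: contraNneq evU => Ui0.
  by rewrite (cardsD1 i U) iU Ui0.
case/setD1P: jUi => ne_ji jU; set U' := U :\ i :\ j.
have cardU : #|U| = #|U'|.+2.
  by rewrite (cardsD1 i U) iU (cardsD1 j (U :\ i)) !inE ne_ji jU.
have U'T : U' \subset T.
  by apply: subset_trans UT; apply: subset_trans (subD1set _ _) (subD1set _ _).
have flipsE : flips U w = flip_fun j (flip_fun i (flips U' w)).
  apply/ffunP => x; rewrite !ffunE !inE.
  have [->|_] := eqVneq x j; first by rewrite (negbTE ne_ji) jU.
  by have [->|_] := eqVneq x i; first by rewrite iU.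
rewrite flipsE (count_agree_flip2 _ marg) ?(subsetP UT) // IH //.
- by move: ltU; rewrite cardU; lia.
- by move: evU; rewrite cardU /= negbK.
Qed.

Lemma count_agree_Rperm_notin S c w P : c \notin S -> w c = false ->
  count (agree S w \o Rperm c) P
  = count (agree (c |: S) w) P + count (agree (c |: S) (flips S (flip_fun c w))) P.
Proof.
move=> cNS wc; have ne_c j : j \in S -> (j == c) = false.
  by move=> jS; apply: contraNF cNS => /eqP <-.
rewrite [LHS](count_split _ (fun z => ~~ z c)); congr (_ + _); apply: eq_count => z /=;
  rewrite (agreeD1 _ _ (setU11 c S)) setU1K // ?negbK ?ffunE ?(negbTE cNS) ?eqxx wc.
- case zc: (z c); rewrite /= ?andbF ?andbT //.
  by apply: eq_forallb_in => j jS; rewrite permE ffunE ne_c // zc addbF.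
- case zc: (z c); rewrite /= ?andbF ?andbT //.
  apply: eq_forallb_in => j jS; rewrite permE !ffunE ne_c // jS zc.
  by case: (z j); case: (w j).
Qed.

Lemma has_strength_cperm m P s : has_strength m P -> has_strength m (map (cperm s) P).
Proof.
move=> Pm S leS w; rewrite count_map size_map.
have cardsS : #|s @: S| = #|S| by rewrite card_imset //; apply: perm_inj.
have := Pm (s @: S); rewrite cardsS => /(_ leS (cperm s^-1 w)) <-.
by congr (_ * _); apply: eq_count => z; rewrite /= agree_cperm.
Qed.

Lemma has_strength_flip m P i : has_strength m P -> has_strength m (map (flip i) P).
Proof.
move=> Pm S leS w; rewrite count_map size_map -(Pm _ leS (flip i w)).
by congr (_ * _); apply: eq_count => z; rewrite /= agree_flip.
Qed.

Lemma has_strength_Rperm m P c :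
  ~~ odd m -> has_strength m P -> has_strength m (map (Rperm c) P).
Proof.
move=> evm Pm S leS w; rewrite count_map size_map.
have [cS|cNS] := boolP (c \in S).
  rewrite -(Pm _ leS (Rperm c w)); congr (_ * _).
  by apply: eq_count => z; exact: agree_Rperm_in.
pose w0 : {ffun 'I_k -> bool} := [ffun j => (j != c) && w j].
have w0E : agree S w =1 agree S w0.
  move=> z; apply: eq_forallb_in => j jS.
  by rewrite ffunE (_ : j != c) //; apply: contraNneq cNS => <-.
rewrite (eq_count (a2 := agree S w0 \o Rperm c)) => [|z]; last exact: w0E.
rewrite count_agree_Rperm_notin ?ffunE ?eqxx //.
have cardT : #|c |: S| = #|S|.+1 by rewrite cardsU1 cNS.
move: leS; rewrite leq_eqVlt => /orP[/eqP eqS|ltS]; last first.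
  by apply: sum_of_halves; rewrite -cardT; apply: Pm; rewrite cardT.
have marg j v : j \in c |: S -> count (agree ((c |: S) :\ j) v) P = size P %/ 2 ^ m.
  move=> jT; have cardTj : #|(c |: S) :\ j| = m.
    by move: cardT; rewrite (cardsD1 j) jT eqS => -[].
  by have := Pm _ (eq_leq cardTj) v; rewrite cardTj => <-; rewrite mulnK ?expn_gt0.
rewrite (count_agree_flips_even _ marg) ?subsetUr ?eqS //.
by rewrite -(count_agreeD1 _ _ (setU11 c S)) setU1K // -eqS -(eq_count w0E) Pm ?eqS.
Qed.

Lemma has_strength_GOD m P g : ~~ odd m -> g \in GOD k ->
  has_strength m P -> has_strength m (map g P).
Proof.
move=> evm g_GOD; move: g g_GOD P; apply: GOD_ind => [|g h IH h_gen] P.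
  by rewrite (eq_map (@perm1 _)) map_id.
move=> /IH; rewrite (eq_map (permM g h)) (map_comp h g).
case/setUP: h_gen => [/setUP[]|] /imsetP[x _ ->].
- exact: has_strength_cperm.
- exact: has_strength_flip.
- exact: has_strength_Rperm.
Qed.

End Strength.

Definition pts N k (W : 'M[int]_(N, k)) : seq {ffun 'I_k -> bool} :=
  map (@toPt k) (rows W).

Lemma size_pts N k (W : 'M[int]_(N, k)) : size (pts W) = N.
Proof. by rewrite /pts /rows !size_map -enumT size_enum_ord. Qed.

Lemma pts_actOD N k g (W : 'M[int]_(N, k)) : pts (actOD g W) = map g (pts W).
Proof. by rewrite /pts /rows -!map_comp; apply: eq_map => i; apply: toPt_actOD. Qed.

Lemma pm1_eq_sgnb x b : pm1 x -> (x == sgnb b) = ((x == (-1)%R) == b).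
Proof. by move/pm1E => {1}->; rewrite (inj_eq sgnb_inj). Qed.

Lemma card_rows_agree N k t (X : 'M[int]_(N, k)) (c : 'I_t -> 'I_k) v
    (w : {ffun 'I_k -> bool}) :
  pm1mx X -> (forall j, v j = sgnb (w (c j))) ->
  #|[set i | [forall j, X i (c j) == v j]]| = count (agree (c @: [set: 'I_t]) w) (pts X).
Proof.
move=> /pm1mxP X_pm1 vE; rewrite cardsE cardE /enum_mem size_filter !count_map.
apply: eq_count => i /=; apply/forallP/forall_inP => [Xv _ /imsetP[j _ ->] | Xw j].
  by have := Xv j; rewrite vE pm1_eq_sgnb // !ffunE mxE.
by have := Xw _ (imset_f c (in_setT j)); rewrite vE pm1_eq_sgnb // !ffunE mxE.
Qed.

Lemma isOA2_has_strength N k t (X : 'M[int]_(N, k)) :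
  pm1mx X -> t <= k -> isOA2 t X <-> has_strength t (pts X).
Proof.
move=> X_pm1 le_tk; split=> [[_ _ XOA] | Xt].
  apply: has_strength_exact => // S cardS w.
  pose c (j : 'I_t) : 'I_k := enum_val (cast_ord (esym cardS) j).
  have c_inj : injective c by move=> j1 j2 /enum_val_inj /cast_ord_inj.
  have cE : c @: [set: 'I_t] = S.
    apply/eqP; rewrite eqEcard card_imset // cardsT card_ord cardS leqnn andbT.
    by apply/subsetP => _ /imsetP[j _ ->]; apply: enum_valP.
  rewrite size_pts -cE -(card_rows_agree (v := fun j => sgnb (w (c j)))) //.
  by apply: XOA => // j; apply: pm1_sgnb.
split=> // c c_inj v v_pm1.
pose w : {ffun 'I_k -> bool} := [ffun x => [exists j, (c j == x) && (v j == (-1)%R)]].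
have vE j : v j = sgnb (w (c j)).
  rewrite (pm1E (v_pm1 j)) ffunE; congr sgnb; apply/idP/existsP => [vj|[j']].
    by exists j; rewrite eqxx.
  by case/andP => /eqP/c_inj ->.
have cardc : #|c @: [set: 'I_t]| = t by rewrite card_imset // cardsT card_ord.
have := Xt _ (eq_leq cardc) w; rewrite cardc size_pts => XtE.
by rewrite (card_rows_agree _ vE).
Qed.

Theorem theorem6 (N k t : nat) (Y X : 'M[int]_(N, k)) :
  (1 <= t)%N -> isOA2 t Y -> pm1mx X ->
  (od_equiv X Y <->
     exists2 g, g \in GOD k & perm_eq (rows X) (rows (actOD g Y)))
  /\ (od_equiv X Y -> isOA2 (2 * t./2) X).
Proof.
move=> _ Y_OA X_pm1; have [Y_pm1 le_tk _] := Y_OA.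
split; first split.
- exact: GOD_od_equiv.
- by case=> g; apply: od_equiv_GOD.
case/(GOD_od_equiv X_pm1 Y_pm1) => g g_GOD XgY.
have le_t2t : 2 * t./2 <= t by rewrite mul2n -[leqRHS](odd_double_half t) leq_addl.
apply/isOA2_has_strength => //; first exact: leq_trans le_t2t le_tk.
apply: has_strength_perm (_ : perm_eq (pts (actOD g Y)) (pts X)) _.
  by rewrite perm_sym; apply: perm_map.
rewrite pts_actOD; apply: has_strength_GOD g_GOD _; first by rewrite mul2n odd_double.
by apply: has_strength_mono le_t2t _; apply/isOA2_has_strength.
Qed.
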